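(* Let $X_1,X_2,\dots$ be iid real random variables with common continuous distribution function $F$. Then for all integers $1\le j<k$ and all $y_1,y_2\in\mathbb{R}$, \[ \Pr(X_j\le y_1,X_k\le y_2\mid X_j\text{ and }X_k\text{ are records}) =\begin{cases} \frac{F^j(y_1)}{k-j}\left(kF^{k-j}(y_2)-jF^{k-j}(y_1)\right), & \text{if } F(y_1)<F(y_2),\\[2pt] F^k(y_2)=\Pr(X_k\le y_2\mid X_k\text{ is a record}), & \text{if } F(y_2)\le F(y_1). \end{cases} \]
   Context: $X_m$ is a record if $X_m>\max(X_1,\dots,X_{m-1})$; $X_1$ is always a record. *)

From HB Require Import structures.
From mathcomp Require Import all_boot all_order all_algebra.
From mathcomp Require Import all_classical all_reals all_analysis.
Set Implicit Arguments. Unset Strict Implicit. Unset Printing Implicit Defensive.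
Import Order.TTheory GRing.Theory Num.Theory.
Import numFieldNormedType.Exports.
Local Open Scope classical_set_scope.
Local Open Scope ring_scope.

Definition prb d (T : measurableType d) (R : realType) (P : probability T R)
  (A : set T) : R := fine (P A).

Definition cond_prob d (T : measurableType d) (R : realType)
  (P : probability T R) (A B : set T) : R :=
  prb P (A `&` B) / prb P B.

(* The sequence X_1, X_2, ... is represented by X : nat -> {RV P >-> R}
   with X_n := X (n.-1), i.e. X 0 is X_1. *)
Definition Xn d (T : measurableType d) (R : realType) (P : probability T R)
  (X : nat -> {RV P >-> R}) (n : nat) : T -> R := fun w => X n.-1 w.

Definition mutually_independent d (T : measurableType d) (R : realType)
  (P : probability T R) (X : nat -> {RV P >-> R}) : Prop :=
  forall (s : seq nat) (B : nat -> set R), uniq s ->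
    (forall i, measurable (B i)) ->
    prb P (\bigcap_(i in [set i | i \in s]) (X i @^-1` B i))
    = \prod_(i <- s) prb P (X i @^-1` B i).

Definition identically_distributed d (T : measurableType d) (R : realType)
  (P : probability T R) (X : nat -> {RV P >-> R}) : Prop :=
  forall n (y : R), P [set w | X n w <= y] = P [set w | X 0%N w <= y].

Definition common_cdf d (T : measurableType d) (R : realType)
  (P : probability T R) (X : nat -> {RV P >-> R}) (y : R) : R :=
  prb P [set w | X 0%N w <= y].

Definition is_record d (T : measurableType d) (R : realType)
  (P : probability T R) (X : nat -> {RV P >-> R}) (m : nat) : set T :=
  [set w | forall i, (1 <= i < m)%N -> Xn X i w < Xn X m w].

From HB Require Import structures.
From mathcomp Require Import all_boot all_order all_algebra.
From mathcomp Require Import all_classical all_reals all_analysis.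
From mathcomp Require Import measurable_realfun ring zify.
Import Order.TTheory GRing.Theory Num.Theory.
Import numFieldNormedType.Exports.
Local Open Scope classical_set_scope.
Local Open Scope ring_scope.

(* View the sample path w |-> (X_i w)_i as a random element of R^nat, with the
   sigma-algebra generated by the rectangles {x | x_i <= c_i for i in s}.
   Independence and identical distribution make the law of the path invariant
   under transpositions of indices, since both laws agree on rectangles, a
   pi-system. Continuity of F makes ties null: cutting R into N cells of mass
   1/N bounds P(X_a = X_b) by 1/N. Hence for an event S symmetric in a block I
   of indices, the maximum over I falls on each index of I with the same
   probability, and P(S, max of I at a) = P(S) / |I|. Applying this to the
   blocks {1..k}, {1..j} and {j+1..k} reduces the joint law of two records to
   products of powers of F. *)

Lemma divr_scaled {F : fieldType} {a b c x : F} : b * c = 1 -> a * c = x ->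
  a / b = x.
Proof.
move=> bc1 <-; have b0 : b != 0.
  by apply/negP => /eqP b0; move: bc1; rewrite b0 mul0r => /esym/eqP; rewrite oner_eq0.
by rewrite -[a / b]mulr1 -bc1 mulrA divfK.
Qed.

Section prb.
Context {d} {T : measurableType d} {R : realType} (P : probability T R).
Implicit Types A B N : set T.

Lemma prbE A : measurable A -> (prb P A)%:E = P A.
Proof. by move=> mA; rewrite /prb fineK// fin_num_measure. Qed.

Lemma prb_ge0 A : 0 <= prb P A.
Proof. by rewrite /prb fine_ge0// measure_ge0. Qed.

Lemma prbT : prb P setT = 1.
Proof. by rewrite /prb probability_setT. Qed.

Lemma le_prb A B : measurable A -> measurable B -> A `<=` B ->
  prb P A <= prb P B.
Proof. by move=> mA mB AB; rewrite -lee_fin !prbE// le_measure// inE. Qed.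

Lemma prbU A B : measurable A -> measurable B -> A `&` B = set0 ->
  prb P (A `|` B) = prb P A + prb P B.
Proof.
move=> mA mB AB0; apply: EFin_inj.
by rewrite EFinD !prbE ?measureU//; exact: measurableU.
Qed.

Lemma prbD A B : measurable A -> measurable B -> B `<=` A ->
  prb P (A `\` B) = prb P A - prb P B.
Proof.
move=> mA mB BA; rewrite -[in prb P A](setDUK BA) setUC prbU ?addrK//.
- exact: measurableD.
- by rewrite setDKI.
Qed.

Lemma prb_bigU (I : choiceType) (s : seq I) (A : I -> set T) :
  (forall i, measurable (A i)) -> uniq s ->
  {in s &, forall i j, i != j -> A i `&` A j = set0} ->
  prb P (\big[setU/set0]_(i <- s) A i) = \sum_(i <- s) prb P (A i).
Proof.
move=> mA; elim: s => [_ _|i s IH /= /andP[si us] dis].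
  by rewrite !big_nil /prb measure0.
rewrite !big_cons prbU ?IH//.
- by move=> j k js ks; apply: dis; rewrite inE ?js ?ks orbT.
- exact: bigsetU_measurable.
- rewrite -bigcup_seq setI_bigcupr bigcup0// => j js.
  by apply: dis; rewrite ?mem_head ?inE ?js ?orbT//; apply: contraNneq si => ->.
Qed.

Lemma le_prb_bigU (I : Type) (s : seq I) (A : I -> set T) :
  (forall i, measurable (A i)) ->
  prb P (\big[setU/set0]_(i <- s) A i) <= \sum_(i <- s) prb P (A i).
Proof.
move=> mA; elim: s => [|i s IH]; first by rewrite !big_nil /prb measure0.
rewrite !big_cons (le_trans _ (lerD (lexx _) IH))// -lee_fin EFinD !prbE//.
- by apply: measureU2 => //; exact: bigsetU_measurable.
- exact: bigsetU_measurable.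
- by apply: measurableU => //; exact: bigsetU_measurable.
Qed.

Lemma le_prb_negligible A B N : measurable A -> measurable B ->
  P.-negligible N -> A `<=` B `|` N -> prb P A <= prb P B.
Proof.
move=> mA mB [M [mM PM0 NM]] ABN.
have ABM : A `<=` B `|` M by move=> x /ABN [Bx|/NM Mx]; [left|right].
have mBM : measurable (B `|` M) by exact: measurableU.
have PM : prb P M = 0 by rewrite /prb PM0.
rewrite (le_trans (le_prb _ _ mA mBM ABM))// -[leRHS]addr0 -PM -lee_fin EFinD.
by rewrite !prbE//; exact: measureU2.
Qed.

End prb.

Definition ntperm (a b i : nat) : nat :=
  if i == a then b else if i == b then a else i.

Lemma ntpermK a b : involutive (ntperm a b).
Proof.
move=> i; rewrite /ntperm; case: (eqVneq i a) => [->|ia]; rewrite ?eqxx.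
  by case: (eqVneq b a) => [->|]; rewrite ?eqxx.
case: (eqVneq i b) => [->|ib]; first by rewrite eqxx.
by rewrite (negPf ia) (negPf ib).
Qed.

Lemma ntpermL a b : ntperm a b a = b.
Proof. by rewrite /ntperm eqxx. Qed.

Lemma ntperm_eq {U : Type} {f : nat -> U} {a b} : f a = f b ->
  forall i, f (ntperm a b i) = f i.
Proof.
move=> fab i; rewrite /ntperm.
by case: eqVneq => [->|_]; [|case: eqVneq => [->|]].
Qed.

Section path_space.
Context {R : realType}.
Implicit Types (s I : seq nat) (x : nat -> R).

Definition rect s (c : nat -> R) : set (nat -> R) :=
  [set x | forall i, i \in s -> x i <= c i].

Definition rects : set (set (nat -> R)) := [set A | exists s c, A = rect s c].

Definition path_space := g_sigma_algebraType rects.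

Lemma setI_closed_rects : setI_closed rects.
Proof.
move=> _ _ [s1 [c1 ->]] [s2 [c2 ->]].
exists (s1 ++ s2), (fun i => if i \in s1 then
  (if i \in s2 then Num.min (c1 i) (c2 i) else c1 i) else c2 i).
apply/seteqP; split=> x /=.
- move=> [x1 x2] i; rewrite mem_cat.
  case: ifP => i1; last by move=> /= /x2.
  by case: ifP => i2 _; rewrite ?le_min ?x1 ?x2.
- move=> x12; split=> i si; have := x12 i; rewrite mem_cat si ?orbT => /(_ isT);
    by case: ifP => // _; rewrite le_min => /andP[].
Qed.

Lemma measurable_rect s c : measurable (rect s c : set path_space).
Proof. by apply: sub_sigma_algebra; exists s, c. Qed.

Lemma measurable_coord i : measurable_fun setT (fun x : path_space => x i).
Proof.
apply: (measurability _ (RGenOInfty.measurableE R)).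
move=> _ [_ [c ->] <-]; rewrite setTI.
have -> : (fun x => x i) @^-1` `]c, +oo[ = ~` rect [:: i] (fun=> c).
  apply/seteqP; split=> x /=; rewrite in_itv/= andbT.
  - by move=> cx /(_ i (mem_head _ _)); rewrite leNgt cx.
  - by move=> xc; rewrite ltNge; apply/negP => xi; apply: xc => l /[!inE] /eqP ->.
by apply: measurableC; exact: measurable_rect.
Qed.

End path_space.
Arguments path_space R : clear implicits.

Section measurable_comparison.
Context {d} {T : measurableType d} {R : realType}.
Variables (f g : T -> R).
Hypotheses (mf : measurable_fun setT f) (mg : measurable_fun setT g).

Lemma measurable_ltf : measurable [set x | f x < g x].
Proof. by rewrite -[X in measurable X]setTI; exact: measurable_fun_ltr. Qed.

Lemma measurable_eqf : measurable [set x | f x = g x].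
Proof.
rewrite (_ : [set x | _] = [set x | f x == g x]); last first.
  by apply/seteqP; split=> x /eqP.
by rewrite -[X in measurable X]setTI; exact: measurable_fun_eqr.
Qed.

End measurable_comparison.

Section strict_max.
Context {R : realType}.
Implicit Types (s I J : seq nat) (x : nat -> R).

Definition strict_max I a : set (nat -> R) :=
  [set x | forall l, l \in I -> l != a -> x l < x a].

Lemma measurable_strict_max I a : measurable (strict_max I a : set (path_space R)).
Proof.
rewrite (_ : strict_max I a = \bigcap_(l in [set l | l \in I /\ l != a])
  [set x | x l < x a]); last first.
  by apply/seteqP; split=> x xI l => [[]|]; [apply: xI|move=> lI la; apply: xI].
apply: bigcap_measurableType => l _.
by apply: measurable_ltf; exact: measurable_coord.
Qed.

Definition swap_invariant I (S : set (nat -> R)) :=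
  forall a b x, a \in I -> b \in I -> S x -> S (x \o ntperm a b).

Lemma swap_invariantE I S a b x : swap_invariant I S -> a \in I -> b \in I ->
  S (x \o ntperm a b) <-> S x.
Proof.
move=> invS aI bI; split; last exact: invS.
by move=> /(invS a b _ aI bI); congr S; apply/funext => i /=; rewrite ntpermK.
Qed.

Lemma swap_invariantI I S1 S2 : swap_invariant I S1 -> swap_invariant I S2 ->
  swap_invariant I (S1 `&` S2).
Proof.
by move=> inv1 inv2 a b x aI bI [/inv1 h1 /inv2 h2]; split; [apply: h1|apply: h2].
Qed.

Lemma swap_invariantD I S1 S2 : swap_invariant I S1 -> swap_invariant I S2 ->
  swap_invariant I (S1 `\` S2).
Proof.
move=> inv1 inv2 a b x aI bI [S1x S2x]; split; first exact: inv1.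
by move/(swap_invariantE _ _ _ _ _ inv2 aI bI).
Qed.

Lemma swap_invariant_sub I1 I2 S : {subset I1 <= I2} ->
  swap_invariant I2 S -> swap_invariant I1 S.
Proof. by move=> I12 invS a b x aI bI; apply: invS; apply: I12. Qed.

Lemma swap_invariant_rect I s c :
  {in I &, forall a b, (a \in s) = (b \in s) /\ c a = c b} ->
  swap_invariant I (rect s c).
Proof.
move=> sc a b x aI bI xc i si /=; have [sab cab] := sc a b aI bI.
rewrite -(ntperm_eq cab i); apply: xc.
by rewrite (@ntperm_eq _ (fun l => l \in s) _ _ sab).
Qed.

Lemma swap_invariant_rect_iota I n c : {subset I <= iota 0 n} ->
  {in I &, forall a b, c a = c b} -> swap_invariant I (rect (iota 0 n) c).
Proof.
move=> In cI; apply: swap_invariant_rect => a b aI bI.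
by rewrite (In _ aI) (In _ bI) (cI a b).
Qed.

Lemma strict_max_comp I a (tau : nat -> nat) x : involutive tau ->
  (forall l, (tau l \in I) = (l \in I)) ->
  strict_max I a (x \o tau) <-> strict_max I (tau a) x.
Proof.
move=> tauK tauI; split=> xmax l lI la /=.
- have := xmax (tau l); rewrite tauI /= tauK; apply=> //.
  by apply: contra_neq la => <-; rewrite tauK.
- by apply: xmax; rewrite ?tauI//; apply: contra_neq la => /(can_inj tauK).
Qed.

Lemma swap_invariant_strict_max I J a :
  {in I &, forall b c, (b \in J) = (c \in J) /\ a != b} ->
  swap_invariant I (strict_max J a).
Proof.
move=> IJ b c x bI cI xmax; have [Jbc ab] := IJ b c bI cI.
have [_ ac] := IJ c b cI bI.
rewrite /= (strict_max_comp _ _ _ _ (ntpermK b c)); last first.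
  exact: (@ntperm_eq _ (fun l => l \in J) _ _ Jbc).
by rewrite /ntperm (negPf ab) (negPf ac).
Qed.

End strict_max.

Section shuffled_path.
Context {d} {T : measurableType d} {R : realType} {P : probability T R}.
Variable X : nat -> {RV P >-> R}.

Definition shuffled_path (pi : nat -> nat) (w : T) : path_space R :=
  fun i => X (pi i) w.

Lemma measurable_shuffled_path pi : measurable_fun setT (shuffled_path pi).
Proof.
apply: (@measurability _ _ T (path_space R) setT _ (@rects R)) => //.
move=> _ [_ [s [c ->]] <-]; rewrite setTI.
rewrite (_ : _ @^-1` _ = \bigcap_(i in [set` s]) X (pi i) @^-1` `]-oo, c i]).
  apply: bigcap_measurableType => i _; exact: measurable_funPTI.
by apply/seteqP; split=> w /= wc i /wc; rewrite ?in_itv.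
Qed.

Lemma measurable_shuffled_path_preimage pi (S : set (path_space R)) : measurable S ->
  measurable (shuffled_path pi @^-1` S).
Proof.
by move=> mS; rewrite -[X in measurable X]setTI; apply: measurable_shuffled_path.
Qed.

HB.instance Definition _ pi := isMeasurableFun.Build _ _ _ _ (shuffled_path pi)
  (measurable_shuffled_path pi).

Hypotheses (X_indep : mutually_independent X) (X_id : identically_distributed X).
Local Notation F := (common_cdf X).

Lemma prbX_le i y : prb P (X i @^-1` `]-oo, y]) = F y.
Proof. by rewrite preimage_itvNyc /prb /common_cdf X_id. Qed.

Lemma prb_indep2 a b (B C : set R) : a != b -> measurable B -> measurable C ->
  prb P (X a @^-1` B `&` X b @^-1` C) = prb P (X a @^-1` B) * prb P (X b @^-1` C).
Proof.
move=> ab mB mC; pose D i := if i == a then B else C.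
have mD i : measurable (D i) by rewrite /D; case: ifP.
have := X_indep [:: a; b] D; rewrite /= mem_seq1 ab => /(_ isT mD).
rewrite bigcap_seq big_cons big_seq1 big_cons big_seq1 /D eqxx.
by rewrite eq_sym (negPf ab).
Qed.

Lemma prb_rect pi s c : involutive pi ->
  prb P (shuffled_path pi @^-1` rect s c) = \prod_(i <- undup s) F (c i).
Proof.
move=> piK; have := X_indep (map pi (undup s)) (fun i => `]-oo, c (pi i)]%classic).
rewrite map_inj_uniq ?undup_uniq; last exact: can_inj piK.
rewrite big_map => /(_ isT (fun=> measurable_itv _)).
under eq_bigr do rewrite piK prbX_le.
move=> <-; congr prb; apply/seteqP; split=> w /=.
- by move=> wc _ /mapP[i si ->]; rewrite /= in_itv/= piK wc// -mem_undup.
- move=> wc i si; have /= := wc (pi i); rewrite in_itv/= piK; apply.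
  by apply: map_f; rewrite mem_undup.
Qed.

Lemma prb_box n y :
  prb P (shuffled_path id @^-1` rect (iota 0 n) (fun=> y)) = F y ^+ n.
Proof.
rewrite prb_rect// undup_id ?iota_uniq//.
by rewrite big_const_seq count_predT size_iota iter_mulr_1.
Qed.

Lemma prb_rect_levels n l y1 y2 : (l <= n)%N ->
  prb P (shuffled_path id @^-1` rect (iota 0 n) (fun i => if (i < l)%N then y1 else y2))
  = F y1 ^+ l * F y2 ^+ (n - l).
Proof.
move=> ln; rewrite prb_rect// undup_id ?iota_uniq//.
have -> : iota 0 n = iota 0 l ++ iota l (n - l) by rewrite -iotaD subnKC.
rewrite big_cat (eq_big_seq (fun=> F y1)) => [|i]; last first.
  by rewrite mem_iota => /andP[_ ->].
rewrite [X in _ * X = _](eq_big_seq (fun=> F y2)) => [|i]; last first.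
  by rewrite mem_iota => /andP[li _]; rewrite ltnNge li.
by rewrite !big_const_seq !count_predT !size_iota !iter_mulr_1.
Qed.

Lemma shuffled_path_law pi (S : set (path_space R)) : involutive pi ->
  measurable S -> P (shuffled_path pi @^-1` S) = P (shuffled_path id @^-1` S).
Proof.
move=> piK mS.
apply: (@measure_unique _ R (path_space R) (@rects R) (fun=> setT) erefl
  setI_closed_rects _ _ (distribution P (shuffled_path pi))
  (distribution P (shuffled_path id))) => //.
- by move=> _; exists [::], (fun=> 0); apply/seteqP; split.
- by rewrite bigcup_const.
- move=> _ [s [c ->]].
  change (P (shuffled_path pi @^-1` rect s c) = P (shuffled_path id @^-1` rect s c)).
  rewrite -!(prbE P) ?prb_rect//;
    by apply: measurable_shuffled_path_preimage; exact: measurable_rect.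
- by move=> _; rewrite ltey_eq fin_num_measure.
Qed.

End shuffled_path.

Lemma exists_step {U : Type} {A : nat -> set U} {N u} :
  A 0%N = set0 -> A N u -> exists2 m, (m < N)%N & (A m.+1 `\` A m) u.
Proof.
move=> A0; elim: N => [|N IH]; first by rewrite A0.
move=> AN1; have [ANu|nANu] := pselect (A N u); last by exists N.
by have [m mN Amu] := IH ANu; exists m => //; exact: ltnW.
Qed.

Section no_ties.
Context {d} {T : measurableType d} {R : realType} {P : probability T R}.
Variable X : nat -> {RV P >-> R}.
Hypotheses (X_indep : mutually_independent X) (X_id : identically_distributed X).
Hypothesis F_cont : continuous (common_cdf X).
Local Notation F := (common_cdf X).

Lemma common_cdf_nondecreasing : {homo F : y z / y <= z}.
Proof.
move=> y z yz; rewrite -!(prbX_le X X_id 0).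
apply: le_prb; [exact: measurable_funPTI..|] => w /=; rewrite !in_itv/=.
by move=> /le_trans; apply.
Qed.

Lemma common_cdfE y : F y = fine (cdf (X 0%N) y).
Proof. by rewrite /common_cdf /prb /cdf /distribution /pushforward preimage_itvNyc. Qed.

Lemma common_cdf_onto q : 0 < q < 1 -> exists t, F t = q.
Proof.
move=> /andP[q0 q1].
have [u Fu] : exists u, F u < q.
  have : fine \o cdf (X 0%N) @ -oo --> (0 : R) by apply: fine_cvg; exact: cvg_cdfNy0.
  move=> /cvgr_lt/(_ _ q0)/filter_ex[u Fu]; exists u; by rewrite common_cdfE.
have [v Fv] : exists v, q < F v.
  have : fine \o cdf (X 0%N) @ +oo --> (1 : R) by apply: fine_cvg; exact: cvg_cdfy1.
  move=> /cvgr_gt/(_ _ q1)/filter_ex[v Fv]; exists v; by rewrite common_cdfE.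
have uv : u <= v.
  rewrite leNgt; apply/negP => /ltW/common_cdf_nondecreasing.
  by apply/negP; rewrite -ltNge (lt_trans Fu).
have Fq : Num.min (F u) (F v) <= q <= Num.max (F u) (F v).
  by rewrite ge_min le_max (ltW Fu) (ltW Fv) orbT.
by have [t _ Ftq] := IVT uv (continuous_subspaceT F_cont) Fq; exists t.
Qed.

Lemma common_cdf_grid N : (0 < N)%N -> exists U : nat -> set R,
  [/\ forall m, measurable (U m), U 0%N = set0, U N = setT,
      forall m, (m < N)%N -> U m `<=` U m.+1 &
      forall i m, (m <= N)%N -> prb P (X i @^-1` U m) = m%:R / N%:R].
Proof.
move=> N0; have N0R : (0 < N%:R :> R) by rewrite ltr0n.
have quantile m : exists t, (0 < m < N)%N -> F t = m%:R / N%:R.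
  have [/andP[m0 mN]|] := boolP (0 < m < N)%N; last by exists 0.
  have [t Ft] : exists t, F t = m%:R / N%:R.
    by apply: common_cdf_onto; rewrite divr_gt0 ?ltr0n// ltr_pdivrMr// mul1r ltr_nat.
  by exists t.
have [t Ft] := choice quantile.
pose U m := if m == 0%N then set0 else if m == N then setT else `]-oo, t m]%classic.
have NN0 : (N == 0%N) = false by rewrite (negPf (lt0n_neq0 N0)).
exists U; split.
- by move=> m; rewrite /U; case: ifP => // _; case: ifP.
- by rewrite /U eqxx.
- by rewrite /U NN0 eqxx.
- move=> m mN; rewrite /U /=.
  have [->|m0] := eqVneq m 0%N; first exact: sub0set.
  rewrite (ltn_eqF mN); case: ifP => [_|mN1]; first exact: subsetT.
  move=> r /=; rewrite !in_itv/= => /le_trans; apply.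
  rewrite leNgt; apply/negP => /ltW/common_cdf_nondecreasing.
  rewrite !Ft ?lt0n ?m0 ?ltn_neqAle ?mN1 ?(ltn_eqF mN) ?(ltnW mN)//.
  by rewrite ler_pM2r ?invr_gt0// ler_nat ltnn.
- move=> i m mN; rewrite /U; case: ifP => [/eqP->|m0].
    by rewrite preimage_set0 /prb measure0 mul0r.
  case: ifP => [/eqP->|mN1]; first by rewrite preimage_setT prbT divff ?gt_eqF.
  by rewrite prbX_le// Ft// lt0n m0 ltn_neqAle mN1.
Qed.

Lemma prb_tie_le N a b : (0 < N)%N -> a != b ->
  prb P [set w | X a w = X b w] <= N%:R^-1.
Proof.
move=> N0 ab; have N0R : (N%:R != 0 :> R) by rewrite pnatr_eq0 -lt0n.
(* A tie puts X_a and X_b into a common cell of mass 1/N, which by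
   independence has probability 1/N^2 for the pair. *)
have [U [mU U0 UN Unest PU]] := common_cdf_grid _ N0.
pose C m := U m.+1 `\` U m.
have mC m : measurable (C m) by exact: measurableD.
have PC i m : (m < N)%N -> prb P (X i @^-1` C m) = N%:R^-1.
  move=> mN; rewrite [X i @^-1` _]/(X i @^-1` U m.+1 `\` X i @^-1` U m).
  rewrite prbD; try exact: measurable_funPTI.
    by rewrite !PU ?(ltnW mN)// -mulrBl -natrB// subSnn div1r.
  by move=> w /Unest; apply.
have tie_cells : [set w | X a w = X b w] `<=`
    \big[setU/set0]_(m <- iota 0 N) (X a @^-1` C m `&` X b @^-1` C m).
  move=> w /= abw; rewrite -bigcup_seq.
  have [|m mN Cm] := exists_step U0 (_ : U N (X a w)); first by rewrite UN.
  by exists m; rewrite /= ?mem_iota//; split; rewrite /preimage/= -?abw.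
have mCab m : measurable (X a @^-1` C m `&` X b @^-1` C m).
  by apply: measurableI; exact: measurable_funPTI.
have mtie : measurable [set w | X a w = X b w] by exact: measurable_eqf.
have mcells : measurable
    (\big[setU/set0]_(m <- iota 0 N) (X a @^-1` C m `&` X b @^-1` C m)).
  exact: bigsetU_measurable.
apply: le_trans (le_prb P _ _ mtie mcells tie_cells) _.
apply: le_trans (le_prb_bigU P _ _ _ mCab) _.
rewrite big_seq (eq_bigr (fun=> N%:R^-2)); last first.
  by move=> m; rewrite mem_iota add0n => mN; rewrite prb_indep2 ?PC// -exprVn expr2.
rewrite -big_seq big_const_seq count_predT size_iota iter_addr_0.
by rewrite -[_ *+ N]mulr_natr -exprVn expr2 -mulrA mulVf// mulr1.
Qed.

Lemma no_ties a b : a != b -> P [set w | X a w = X b w] = 0.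
Proof.
move=> ab; have mtie : measurable [set w | X a w = X b w] by exact: measurable_eqf.
apply/eqP; rewrite -(prbE P _ mtie) eqe eq_le prb_ge0 andbT leNgt; apply/negP.
move=> /ltr_add_invr[n]; rewrite add0r ltNge => /negP; apply.
exact: prb_tie_le.
Qed.

End no_ties.

Lemma has_argmax {R : realType} (s : seq nat) (x : nat -> R) : s != [::] ->
  exists2 b, b \in s & forall l, l \in s -> x l <= x b.
Proof.
elim: s => [//|a s IH] _; have [->|s0] := eqVneq s [::].
  by exists a; rewrite ?mem_head// => l /[!inE] /eqP ->.
have [b bs bmax] := IH s0; have [ab|ba] := leP (x a) (x b).
- by exists b => [|l /[!inE] /orP[/eqP->//|/bmax//]]; rewrite inE bs orbT.
- exists a => [|l /[!inE] /orP[/eqP->//|/bmax/le_trans]]; first exact: mem_head.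
  by apply; exact: ltW.
Qed.

Lemma strict_max_or_tie {R : realType} (I : seq nat) (x : nat -> R) : I != [::] ->
  (exists2 b, b \in I & strict_max I b x) \/
  exists b c, [/\ b \in I, c \in I, b != c & x b = x c].
Proof.
move=> I0; have [b bI bmax] := has_argmax I x I0.
have [allb|] := boolP (all (fun l => (l != b) ==> (x l < x b)) I).
  left; exists b => // l lI lb.
  by have := allP allb l lI; rewrite lb.
case/allPn => l lI; rewrite negb_imply -leNgt => /andP[lb bl].
by right; exists l, b; split=> //; apply/le_anti; rewrite bl bmax.
Qed.

Section exchangeable_max.
Context {d} {T : measurableType d} {R : realType} {P : probability T R}.
Variable X : nat -> {RV P >-> R}.
Hypotheses (X_indep : mutually_independent X) (X_id : identically_distributed X).
Hypothesis X_no_ties : forall a b, a != b -> P [set w | X a w = X b w] = 0.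
Local Notation path := (shuffled_path X id).

Lemma prb_strict_max_swap I a b (S : set (path_space R)) : a \in I -> b \in I ->
  measurable S -> swap_invariant I S ->
  prb P (path @^-1` (S `&` strict_max I b)) = prb P (path @^-1` (S `&` strict_max I a)).
Proof.
move=> aI bI mS invS; have tauI l : (ntperm a b l \in I) = (l \in I).
  by apply: (@ntperm_eq _ (fun l => l \in I)); rewrite aI bI.
have mSa : measurable (S `&` strict_max I a).
  by apply: measurableI => //; exact: measurable_strict_max.
rewrite /prb -(shuffled_path_law X X_indep X_id _ _ (ntpermK a b) mSa).
congr (fine (P _)); apply/seteqP; split=> w /= [Sw maxw]; split.
- exact/(swap_invariantE _ _ _ _ (path w) invS aI bI).
- by apply/(strict_max_comp _ _ _ (path w) (ntpermK a b) tauI); rewrite ntpermL.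
- exact/(swap_invariantE _ _ _ _ (path w) invS aI bI).
- by move/(strict_max_comp _ _ _ (path w) (ntpermK a b) tauI): maxw; rewrite ntpermL.
Qed.

Lemma prb_strict_max I a (S : set (path_space R)) : uniq I -> a \in I ->
  measurable S -> swap_invariant I S ->
  prb P (path @^-1` (S `&` strict_max I a)) * (size I)%:R = prb P (path @^-1` S).
Proof.
move=> uI aI mS invS; pose A b := path @^-1` (S `&` strict_max I b).
have mA b : measurable (A b).
  apply: measurable_shuffled_path_preimage; apply: measurableI => //.
  exact: measurable_strict_max.
have disjA : {in I &, forall b c, b != c -> A b `&` A c = set0}.
  move=> b c bI cI bc; apply/seteqP; split=> // w [[_ bmax] [_ cmax]].
  have cb : c != b by rewrite eq_sym.
  by have := lt_trans (bmax c cI cb) (cmax b bI bc); rewrite ltxx.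
pose ties := \big[setU/set0]_(b <- I) \big[setU/set0]_(c <- I | b != c)
  [set w | X b w = X c w].
have ties0 : P.-negligible ties.
  apply: negligible_bigsetU => b _; apply: negligible_bigsetU => c bc.
  by apply/negligibleP; [exact: measurable_eqf|exact: X_no_ties].
have cover : path @^-1` S `<=` \big[setU/set0]_(b <- I) A b `|` ties.
  move=> w Sw; have I0 : I != [::] by apply: contraTneq aI => ->.
  case: (strict_max_or_tie I (path w) I0) => [[b bI bmax]|[b [c [bI cI bc bcw]]]].
    by left; rewrite -bigcup_seq; exists b.
  right; rewrite /ties -bigcup_seq; exists b => //; rewrite -bigcup_seq_cond.
  by exists c; rewrite /= ?cI.
have mU : measurable (\big[setU/set0]_(b <- I) A b) by exact: bigsetU_measurable.
have mSw : measurable (path @^-1` S) by exact: measurable_shuffled_path_preimage.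
have sumA : \sum_(b <- I) prb P (A b) = prb P (A a) * (size I)%:R.
  rewrite (eq_big_seq (fun=> prb P (A a))) => [|b bI]; last exact: prb_strict_max_swap.
  by rewrite big_const_seq count_predT iter_addr_0 mulr_natr.
rewrite -[LHS]/(prb P (A a) * _) -sumA -prb_bigU//.
apply/eqP; rewrite eq_le; apply/andP; split.
- by apply: le_prb => // w; rewrite -bigcup_seq => -[b _ []].
- exact: le_prb_negligible ties0 cover.
Qed.

End exchangeable_max.

Lemma is_record_strict_max {d} {T : measurableType d} {R : realType}
    {P : probability T R} (X : nat -> {RV P >-> R}) j : (0 < j)%N ->
  is_record X j = shuffled_path X id @^-1` strict_max (iota 0 j) j.-1.
Proof.
move=> j0; apply/seteqP; split=> w /= rec.
- move=> l /[!mem_iota] /andP[_ lj] lJ; have := rec l.+1; rewrite /Xn /=; apply; lia.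
- move=> i /andP[i1 ij]; rewrite /Xn; apply: rec; rewrite ?mem_iota; lia.
Qed.

Section record_events.
Context {R : realType} {j k : nat}.
Hypotheses (j_gt0 : (0 < j)%N) (jk : (j < k)%N).
Local Notation Rj := (@strict_max R (iota 0 j) j.-1).
Local Notation Rk := (@strict_max R (iota 0 k) k.-1).

Lemma records_below (x : nat -> R) : (Rj `&` Rk) x ->
  forall l, (l < k)%N -> x l <= x k.-1 /\ ((l < j)%N -> x l <= x j.-1).
Proof.
move=> [xj xk] l lk; split=> [|lj].
- have [->//|lK] := eqVneq l k.-1; apply/ltW/xk => //; rewrite mem_iota; lia.
- have [->//|lJ] := eqVneq l j.-1; apply/ltW/xj => //; rewrite mem_iota; lia.
Qed.

Lemma two_records_le (y1 y2 : R) : y1 <= y2 ->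
  [set x | x j.-1 <= y1] `&` [set x | x k.-1 <= y2] `&` (Rj `&` Rk) =
  rect (iota 0 k) (fun i => if (i < j)%N then y1 else y2) `&` (Rj `&` Rk).
Proof.
move=> y12; apply/seteqP; split=> x [xy RRx]; split=> //.
- move=> l /[!mem_iota] /andP[_ lk]; have [xK xJ] := records_below _ RRx _ lk.
  case: xy => xJy xKy; case: ifP => [/xJ/le_trans->//|_].
  exact: le_trans xK xKy.
- have Jk : j.-1 \in iota 0 k by rewrite mem_iota; lia.
  have Kk : k.-1 \in iota 0 k by rewrite mem_iota; lia.
  have Jj : (j.-1 < j)%N by lia.
  have Kj : (k.-1 < j)%N = false by apply/negbTE; lia.
  by split; [have := xy _ Jk; rewrite Jj|have := xy _ Kk; rewrite Kj].
Qed.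

Lemma two_records_ge (y1 y2 : R) : y2 <= y1 ->
  [set x | x j.-1 <= y1] `&` [set x | x k.-1 <= y2] `&` (Rj `&` Rk) =
  rect (iota 0 k) (fun=> y2) `&` (Rj `&` Rk).
Proof.
move=> y21; apply/seteqP; split=> x [xy RRx]; split=> //.
- move=> l /[!mem_iota] /andP[_ lk]; have [xK _] := records_below _ RRx _ lk.
  by case: xy => _; exact: le_trans.
- have Kk : k.-1 \in iota 0 k by rewrite mem_iota; lia.
  have Jk : (j.-1 < k)%N by lia.
  have xKy := xy _ Kk; have [xJK _] := records_below _ RRx _ Jk.
  by split=> //; apply: le_trans xJK (le_trans xKy y21).
Qed.

Lemma strict_max_exceeding (y1 y2 : R) :
  let A := rect (iota 0 k) (fun i => if (i < j)%N then y1 else y2)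
           `\` rect (iota 0 k) (fun=> y1) in
  A `&` Rk = A `&` strict_max (iota j (k - j)) k.-1.
Proof.
apply/seteqP; split=> x [[xA xB] xmax]; split=> //.
  by move=> l /[!mem_iota] /andP[jl lk] lK; apply: xmax => //; rewrite mem_iota; lia.
have [i /[!mem_iota] /andP[_ ik] y1xi] : exists2 i, i \in iota 0 k & y1 < x i.
  apply: contra_notP xB => nexi i ik; rewrite leNgt; apply/negP => y1xi.
  by apply: nexi; exists i.
have ji : (j <= i)%N.
  rewrite leqNgt; apply/negP => ij; have := xA i; rewrite mem_iota ij => /(_ ik).
  by rewrite leNgt y1xi.
have xiK : x i <= x k.-1.
  have [->//|iK] := eqVneq i k.-1; apply/ltW/xmax => //; rewrite mem_iota; lia.
move=> l /[!mem_iota] /andP[_ lk] lK; have [jl|lj] := leqP j l.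
  by apply: xmax => //; rewrite mem_iota; lia.
have := xA l; rewrite mem_iota lj => /(_ lk) /le_lt_trans /(_ y1xi).
by move=> /lt_le_trans; apply.
Qed.

End record_events.

Section two_records.
Context {d} {T : measurableType d} {R : realType} {P : probability T R}.
Variable X : nat -> {RV P >-> R}.
Hypotheses (X_indep : mutually_independent X) (X_id : identically_distributed X).
Hypothesis X_no_ties : forall a b, a != b -> P [set w | X a w = X b w] = 0.
Local Notation F := (common_cdf X).
Local Notation Pr S := (prb P (shuffled_path X id @^-1` S)).

Let strict_max_sym := prb_strict_max X X_indep X_id X_no_ties.

Lemma prb_record_box n y : (0 < n)%N ->
  Pr (rect (iota 0 n) (fun=> y) `&` strict_max (iota 0 n) n.-1) * n%:R = F y ^+ n.
Proof.
move=> n_gt0; have Nn : n.-1 \in iota 0 n by rewrite mem_iota; lia.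
have inv := swap_invariant_rect_iota (iota 0 n) n (fun=> y) (fun _ => id)
  (fun _ _ _ _ => erefl).
have := strict_max_sym _ _ _ (iota_uniq 0 n) Nn (measurable_rect _ _) inv.
by rewrite size_iota prb_box.
Qed.

Lemma prb_record n : (0 < n)%N -> Pr (@strict_max R (iota 0 n) n.-1) * n%:R = 1.
Proof.
move=> n_gt0; have Nn : n.-1 \in iota 0 n by rewrite mem_iota; lia.
have := strict_max_sym _ _ _ (iota_uniq 0 n) Nn measurableT (fun _ _ _ _ _ _ => I).
by rewrite setTI size_iota preimage_setT prbT.
Qed.

Lemma cond_prob_record k y : (0 < k)%N ->
  cond_prob P [set w | Xn X k w <= y] (is_record X k) = F y ^+ k.
Proof.
move=> k_gt0; rewrite /cond_prob is_record_strict_max//.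
apply: (divr_scaled (prb_record _ k_gt0)); rewrite -(prb_record_box _ y k_gt0).
congr (prb P _ * _); apply/seteqP; split=> w [wy wmax]; split=> //.
- move=> i /[!mem_iota] /andP[_ ik]; have [->//|iK] := eqVneq i k.-1.
  by apply: le_trans wy; apply/ltW/wmax; rewrite ?mem_iota.
- by apply: wy; rewrite mem_iota; lia.
Qed.

Variables (j k : nat).
Hypotheses (j_gt0 : (0 < j)%N) (jk : (j < k)%N).
Local Notation Rj := (@strict_max R (iota 0 j) j.-1).
Local Notation Rk := (@strict_max R (iota 0 k) k.-1).

Lemma swap_invariant_last_record : swap_invariant (iota 0 j) Rk.
Proof.
apply: swap_invariant_strict_max => b c /[!mem_iota] bj cj.
by split; [|apply/eqP]; lia.
Qed.

Lemma prb_records (S : set (path_space R)) : measurable S ->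
  swap_invariant (iota 0 k) S -> Pr (S `&` (Rj `&` Rk)) * (j * k)%:R = Pr S.
Proof.
move=> mS invS; rewrite (setIC Rj) setIA natrM mulrA.
have Jj : j.-1 \in iota 0 j by rewrite mem_iota; lia.
have Kk : k.-1 \in iota 0 k by rewrite mem_iota; lia.
have mSk : measurable (S `&` Rk).
  by apply: measurableI => //; exact: measurable_strict_max.
have invSk : swap_invariant (iota 0 j) (S `&` Rk).
  apply: swap_invariantI swap_invariant_last_record.
  by apply: swap_invariant_sub invS => i; rewrite !mem_iota; lia.
have := strict_max_sym _ _ _ (iota_uniq 0 j) Jj mSk invSk; rewrite size_iota => ->.
by have := strict_max_sym _ _ _ (iota_uniq 0 k) Kk mS invS; rewrite size_iota.
Qed.

Lemma prb_box_records y :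
  Pr (rect (iota 0 k) (fun=> y) `&` (Rj `&` Rk)) * (j * k)%:R = F y ^+ k.
Proof.
rewrite prb_records ?prb_box//; first exact: measurable_rect.
exact: swap_invariant_rect_iota.
Qed.

Lemma prb_records_lower (y1 y2 : R) : y1 <= y2 ->
  let A := rect (iota 0 k) (fun i => if (i < j)%N then y1 else y2) in
  Pr (A `&` (Rj `&` Rk)) * (j * k * (k - j))%:R =
  F y1 ^+ j * (k%:R * F y2 ^+ (k - j) - j%:R * F y1 ^+ (k - j)).
Proof.
(* Split A according to whether X_k <= y1. On the remaining part E the value
   X_k exceeds y1, so the record at k is the maximum of the last k - j terms. *)
move=> y12 A; set m := (k - j)%N; pose B := rect (iota 0 k) (fun=> y1).
pose E := A `\` B; pose M : set (nat -> R) := strict_max (iota j m) k.-1.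
have mA : measurable (A : set (path_space R)) by exact: measurable_rect.
have mB : measurable (B : set (path_space R)) by exact: measurable_rect.
have mE : measurable (E : set (path_space R)) by exact: measurableD.
have mRR : measurable (Rj `&` Rk : set (path_space R)).
  by apply: measurableI; exact: measurable_strict_max.
have BA : B `<=` A by move=> x xB i ik; case: ifP => _; rewrite ?(le_trans (xB i ik)).
have invE I : {subset I <= iota 0 k} -> {in I &, forall a b, (a < j) = (b < j)}%N ->
    swap_invariant I E.
  move=> Ik Ij; apply: swap_invariantD; apply: swap_invariant_rect_iota => //.
  by move=> a b aI bI; rewrite (Ij a b).
have PB := prb_box_records y1.
have PE1 : Pr (E `&` (Rj `&` Rk)) * j%:R = Pr (E `&` M).
  have Jj : j.-1 \in iota 0 j by rewrite mem_iota; lia.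
  have mEk : measurable (E `&` Rk : set (path_space R)).
    by apply: measurableI => //; exact: measurable_strict_max.
  have invEk : swap_invariant (iota 0 j) (E `&` Rk).
    apply: swap_invariantI swap_invariant_last_record.
    by apply: invE => [i|a b]; rewrite !mem_iota => *; lia.
  rewrite (setIC Rj) setIA -(strict_max_exceeding j_gt0 jk y1 y2).
  by have := strict_max_sym _ _ _ (iota_uniq 0 j) Jj mEk invEk; rewrite size_iota.
have PE2 : Pr (E `&` M) * m%:R = Pr E.
  have Km : k.-1 \in iota j m by rewrite mem_iota; lia.
  have invEm : swap_invariant (iota j m) E.
    by apply: invE => [i|a b]; rewrite !mem_iota => *; lia.
  by have := strict_max_sym _ _ _ (iota_uniq j m) Km mE invEm; rewrite size_iota.
have PE3 : Pr E = F y1 ^+ j * F y2 ^+ m - F y1 ^+ k.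
  rewrite [Pr E]prbD; try exact: measurable_shuffled_path_preimage.
    by rewrite prb_rect_levels ?prb_box// ltnW.
  by move=> w; apply: BA.
have -> : A `&` (Rj `&` Rk) = (B `&` (Rj `&` Rk)) `|` (E `&` (Rj `&` Rk)).
  by rewrite -setIUl setDUK.
rewrite preimage_setU prbU; last first.
- by apply/seteqP; split=> // w [[Bw _] [[_ nBw] _]].
- by apply: measurable_shuffled_path_preimage; exact: measurableI.
- by apply: measurable_shuffled_path_preimage; exact: measurableI.
move: PB PE1; set b := Pr _; set e := Pr _ => PB PE1.
have -> : (b + e) * (j * k * m)%:R = b * (j * k)%:R * m%:R + k%:R * (e * j%:R * m%:R).
  by rewrite !natrM; ring.
rewrite PB PE1 PE2 PE3.
have kE : k = (j + m)%N by rewrite subnKC// ltnW.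
by rewrite kE exprD natrD; ring.
Qed.

Lemma prb_two_records : Pr (Rj `&` Rk) * (j * k)%:R = 1.
Proof.
by rewrite -[Rj `&` Rk]setTI prb_records ?preimage_setT ?prbT.
Qed.

Lemma two_recordsE :
  is_record X j `&` is_record X k = shuffled_path X id @^-1` (Rj `&` Rk).
Proof. by rewrite !is_record_strict_max//; exact: ltn_trans jk. Qed.

Lemma joint_recordsE y1 y2 :
  [set w | Xn X j w <= y1] `&` [set w | Xn X k w <= y2] `&`
    (is_record X j `&` is_record X k) =
  shuffled_path X id @^-1`
    ([set x | x j.-1 <= y1] `&` [set x | x k.-1 <= y2] `&` (Rj `&` Rk)).
Proof. by rewrite two_recordsE. Qed.

Lemma cond_prob_two_records_le y1 y2 : y1 <= y2 ->
  cond_prob P ([set w | Xn X j w <= y1] `&` [set w | Xn X k w <= y2])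
    (is_record X j `&` is_record X k) =
  F y1 ^+ j / (k - j)%:R * (k%:R * F y2 ^+ (k - j) - j%:R * F y1 ^+ (k - j)).
Proof.
move=> y12; rewrite /cond_prob two_recordsE; apply: divr_scaled prb_two_records _.
rewrite -two_recordsE joint_recordsE (two_records_le j_gt0 jk _ _ y12).
have m0 : (k - j)%:R != 0 :> R by rewrite pnatr_eq0 subn_eq0 -ltnNge.
by rewrite mulrAC -(prb_records_lower _ _ y12) [(j * k * _)%:R]natrM mulrA mulfK.
Qed.

Lemma cond_prob_two_records_ge y1 y2 : y2 <= y1 ->
  cond_prob P ([set w | Xn X j w <= y1] `&` [set w | Xn X k w <= y2])
    (is_record X j `&` is_record X k) = F y2 ^+ k.
Proof.
move=> y21; rewrite /cond_prob two_recordsE; apply: divr_scaled prb_two_records _.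
rewrite -two_recordsE joint_recordsE (two_records_ge j_gt0 jk _ _ y21).
exact: prb_box_records.
Qed.

End two_records.

Theorem corollary3 (d : measure_display) (T : measurableType d) (R : realType)
  (P : probability T R) (X : nat -> {RV P >-> R}) :
  mutually_independent X -> identically_distributed X ->
  continuous (@common_cdf d T R P X) ->
  forall (j k : nat) (y1 y2 : R), (1 <= j)%N -> (j < k)%N ->
  let F := common_cdf X in
  let p := cond_prob P
      ([set w | Xn X j w <= y1] `&` [set w | Xn X k w <= y2])
      (is_record X j `&` is_record X k) in
  (F y1 < F y2 ->
     p = F y1 ^+ j / (k - j)%:R * (k%:R * F y2 ^+ (k - j) - j%:R * F y1 ^+ (k - j)))
  /\
  (F y2 <= F y1 ->
     p = F y2 ^+ k /\
     F y2 ^+ k = cond_prob P [set w | Xn X k w <= y2] (is_record X k)).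
Proof.
move=> X_indep X_id F_cont j k y1 y2 j_gt0 jk F p; rewrite {}/p {}/F.
have X_no_ties := no_ties X X_indep X_id F_cont.
have F_mono := common_cdf_nondecreasing X X_id.
have p_le := cond_prob_two_records_le X X_indep X_id X_no_ties _ _ j_gt0 jk.
have p_ge := cond_prob_two_records_ge X X_indep X_id X_no_ties _ _ j_gt0 jk.
split=> [F12|F21].
  apply: p_le; rewrite leNgt; apply/negP => /ltW/F_mono.
  by rewrite leNgt F12.
split; last by rewrite cond_prob_record// (ltn_trans j_gt0 jk).
have [y12|/ltW/p_ge//] := leP y1 y2.
have F1E : common_cdf X y1 = common_cdf X y2 by apply/le_anti; rewrite F21 F_mono.
rewrite p_le// F1E -mulrBl -natrB ?(ltnW jk)// mulrA divfK.
  by rewrite -exprD subnKC// ltnW.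
by rewrite pnatr_eq0 subn_eq0 -ltnNge.
Qed.
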